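(* Assume the setting below, with $f$ twice continuously differentiable and $\mathbf{H}(\mathbf{x})=d^2f(\mathbf{x})$ positive definite for every $\mathbf{x}$. Let $I\subset(0,\infty)$ be an open interval such that for every $\rho\in I$ the function $\mathcal{E}_\rho$ has a (necessarily unique) minimizer $\mathbf{x}(\rho)$, the map $\rho\mapsto\mathbf{x}(\rho)$ is continuous on $I$, the index sets $\mathcal{N}_E,\mathcal{Z}_E,\mathcal{P}_E,\mathcal{N}_I,\mathcal{Z}_I,\mathcal{P}_I$ computed at $\mathbf{x}(\rho)$ do not depend on $\rho\in I$, and the rows of $\mathbf{U}_{\mathcal{Z}}$ are linearly independent. Then $\rho\mapsto\mathbf{x}(\rho)$ is differentiable on $I$ and satisfies the ordinary differential equation $$\frac{d\mathbf{x}(\rho)}{d\rho}=-\mathbf{P}(\mathbf{x}(\rho))\,\mathbf{u}_{\bar{\mathcal{Z}}}.$$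
   Context: Setting: $f:\mathbb{R}^p\to\mathbb{R}$ convex and twice continuously differentiable; vectors $\mathbf{v}_1,\dots,\mathbf{v}_r,\mathbf{w}_1,\dots,\mathbf{w}_s\in\mathbb{R}^p$ and scalars $d_1,\dots,d_r,e_1,\dots,e_s$; $g_i(\mathbf{x})=\mathbf{v}_i^t\mathbf{x}-d_i$, $h_j(\mathbf{x})=\mathbf{w}_j^t\mathbf{x}-e_j$; $\mathcal{E}_\rho(\mathbf{x})=f(\mathbf{x})+\rho\sum_i|g_i(\mathbf{x})|+\rho\sum_j\max\{0,h_j(\mathbf{x})\}$ (equivalently $f(\mathbf{x})+\rho\|\mathbf{V}\mathbf{x}-\mathbf{d}\|_1+\rho\|\mathbf{W}\mathbf{x}-\mathbf{e}\|_+$, where $\|\mathbf{v}\|_+=\sum_i\max\{v_i,0\}$). Index sets at $\mathbf{x}$: $\mathcal{N}_E=\{i:g_i(\mathbf{x})<0\}$, $\mathcal{Z}_E=\{i:g_i(\mathbf{x})=0\}$, $\mathcal{P}_E=\{i:g_i(\mathbf{x})>0\}$, $\mathcal{N}_I=\{j:h_j(\mathbf{x})<0\}$, $\mathcal{Z}_I=\{j:h_j(\mathbf{x})=0\}$, $\mathcal{P}_I=\{j:h_j(\mathbf{x})>0\}$. $\mathbf{U}_{\mathcal{Z}}$ is the matrix whose rows are $\mathbf{v}_i^t$, $i\in\mathcal{Z}_E$, and $\mathbf{w}_j^t$, $j\in\mathcal{Z}_I$. $\mathbf{u}_{\bar{\mathcal{Z}}}=-\sum_{i\in\mathcal{N}_E}\mathbf{v}_i+\sum_{i\in\mathcal{P}_E}\mathbf{v}_i+\sum_{j\in\mathcal{P}_I}\mathbf{w}_j$.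 With $\mathbf{H}=\mathbf{H}(\mathbf{x})=d^2f(\mathbf{x})$ invertible and $\mathbf{U}_{\mathcal{Z}}$ of full row rank: $\mathbf{P}(\mathbf{x})=\mathbf{H}^{-1}-\mathbf{H}^{-1}\mathbf{U}_{\mathcal{Z}}^t[\mathbf{U}_{\mathcal{Z}}\mathbf{H}^{-1}\mathbf{U}_{\mathcal{Z}}^t]^{-1}\mathbf{U}_{\mathcal{Z}}\mathbf{H}^{-1}$, $\mathbf{Q}(\mathbf{x})=\mathbf{H}^{-1}\mathbf{U}_{\mathcal{Z}}^t[\mathbf{U}_{\mathcal{Z}}\mathbf{H}^{-1}\mathbf{U}_{\mathcal{Z}}^t]^{-1}$, $\mathbf{R}(\mathbf{x})=-[\mathbf{U}_{\mathcal{Z}}\mathbf{H}^{-1}\mathbf{U}_{\mathcal{Z}}^t]^{-1}$ (these are the blocks of the inverse of $\begin{pmatrix}\mathbf{H}&\mathbf{U}_{\mathcal{Z}}^t\\\mathbf{U}_{\mathcal{Z}}&\mathbf{0}\end{pmatrix}$). *)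

(* classical reals.  Vectors of R^p are modelled as
   functions nat -> R of which only the coordinates 0..p-1 are meaningful;
   matrices as nat -> nat -> R. *)
From Stdlib Require Import Reals Lra List ClassicalEpsilon.
Open Scope R_scope.

Definition vec := nat -> R.
Definition mat := nat -> nat -> R.

Fixpoint fsum (n : nat) (f : nat -> R) : R :=
  match n with O => 0 | S k => fsum k f + f k end.

Definition dot (p : nat) (u v : vec) : R := fsum p (fun i => u i * v i).
Definition vnorm (p : nat) (u : vec) : R := sqrt (dot p u u).
Definition vadd (u v : vec) : vec := fun i => u i + v i.
Definition vsub (u v : vec) : vec := fun i => u i - v i.
Definition vscale (t : R) (u : vec) : vec := fun i => t * u i.

Definition mmul (m : nat) (A B : mat) : mat :=
  fun i j => fsum m (fun l => A i l * B l j).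
Definition mvec (m : nat) (A : mat) (v : vec) : vec :=
  fun i => fsum m (fun l => A i l * v l).
Definition transp (A : mat) : mat := fun i j => A j i.
Definition idm : mat := fun i j => if Nat.eq_dec i j then 1 else 0.
Definition zero_mat : mat := fun _ _ => 0.

Definition is_inverse (n : nat) (A B : mat) : Prop :=
  forall i j, (i < n)%nat -> (j < n)%nat ->
    mmul n A B i j = idm i j /\ mmul n B A i j = idm i j.
(* the inverse matrix (chosen by Hilbert's epsilon; meaningful when A invertible) *)
Definition minv (n : nat) (A : mat) : mat :=
  epsilon (inhabits zero_mat) (fun B => is_inverse n A B).

Definition frechet_at (p : nat) (F : vec -> R) (x L : vec) : Prop :=
  forall eps, 0 < eps -> exists delta, 0 < delta /\
    forall h : vec, vnorm p h < delta ->
      Rabs (F (vadd x h) - F x - dot p L h) <= eps * vnorm p h.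

Definition cont_mat_at (p : nat) (M : vec -> mat) (x : vec) : Prop :=
  forall eps, 0 < eps -> exists delta, 0 < delta /\
    forall y : vec, vnorm p (vsub y x) < delta ->
      forall i j, (i < p)%nat -> (j < p)%nat -> Rabs (M y i j - M x i j) < eps.

Definition gfun (p : nat) (v : nat -> vec) (d : nat -> R) (i : nat) (x : vec) : R :=
  dot p (v i) x - d i.

Definition Epen (p r s : nat) (f : vec -> R) (v : nat -> vec) (d : nat -> R)
  (w : nat -> vec) (e : nat -> R) (rho : R) (x : vec) : R :=
  f x + rho * fsum r (fun i => Rabs (gfun p v d i x))
      + rho * fsum s (fun j => Rmax 0 (gfun p w e j x)).

Definition NE p r v d x i := (i < r)%nat /\ gfun p v d i x < 0.
Definition ZE p r v d x i := (i < r)%nat /\ gfun p v d i x = 0.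
Definition PE p r v d x i := (i < r)%nat /\ gfun p v d i x > 0.
Definition NI p s w e x j := (j < s)%nat /\ gfun p w e j x < 0.
Definition ZI p s w e x j := (j < s)%nat /\ gfun p w e j x = 0.
Definition PI p s w e x j := (j < s)%nat /\ gfun p w e j x > 0.

Definition same_index_sets p r s v d w e (x y : vec) : Prop :=
  forall i j,
    (NE p r v d x i <-> NE p r v d y i) /\ (ZE p r v d x i <-> ZE p r v d y i) /\
    (PE p r v d x i <-> PE p r v d y i) /\
    (NI p s w e x j <-> NI p s w e y j) /\ (ZI p s w e x j <-> ZI p s w e y j) /\
    (PI p s w e x j <-> PI p s w e y j).

Definition is_zero (a : R) : bool := if Req_EM_T a 0 then true else false.

(* rows of U_Z: v_i (i in Z_E, increasing), then w_j (j in Z_I, increasing) *)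
Definition Zrows p r s v d w e (x : vec) : list vec :=
  map v (filter (fun i => is_zero (gfun p v d i x)) (seq 0 r)) ++
  map w (filter (fun j => is_zero (gfun p w e j x)) (seq 0 s)).

Definition zero_vec : vec := fun _ => 0.
Definition rows_mat (rows : list vec) : mat := fun k l => nth k rows zero_vec l.

Definition rows_lin_indep (p : nat) (rows : list vec) : Prop :=
  forall c : nat -> R,
    (forall l, (l < p)%nat ->
       fsum (length rows) (fun k => c k * nth k rows zero_vec l) = 0) ->
    forall k, (k < length rows)%nat -> c k = 0.

Definition ubarZ p r s v d w e (x : vec) : vec :=
  fun l =>
    fsum r (fun i => if Rlt_dec (gfun p v d i x) 0 then - v i l
                     else if Rlt_dec 0 (gfun p v d i x) then v i l else 0)
  + fsum s (fun j => if Rlt_dec 0 (gfun p w e j x) then w j l else 0).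

(* P(x) = H^-1 - H^-1 U^t [U H^-1 U^t]^-1 U H^-1, with H = Hs x, U = U_Z(x) *)
Definition Pmat p r s v d w e (Hs : vec -> mat) (x : vec) : mat :=
  let U := rows_mat (Zrows p r s v d w e x) in
  let m := length (Zrows p r s v d w e x) in
  let Hi := minv p (Hs x) in
  let HiUt := mmul p Hi (transp U) in
  let M := mmul p U HiUt in
  fun i j => Hi i j - mmul m (mmul m HiUt (minv m M)) (mmul p U Hi) i j.

(* Fix rho0 in I, write x0 = x(rho0), P = P(x0), u = u_{bar Z}(x0), H = d^2 f(x0).
   1. KKT condition (kkt_tangent): near a minimizer, every penalty term is affine
      along directions h tangent to the active constraints, so first-order
      optimality gives grad f(x).h + rho u_{bar Z}(x).h = 0 for such h.
   2. Since the index sets do not move along the trajectory, U_Z and u_{bar Z} are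
      the same at every x(rho), and x(rho) - x0 lies in the kernel of U_Z.
   3. Linear algebra (module ProjectorAlgebra, with MathComp matrices): the rows of
      P are orthogonal to the rows of U_Z, and P H D = D whenever U_Z D = 0.
   4. Testing the KKT conditions at rho and rho0 against the rows of P and
      expanding grad f to first order around x0 yields
         Dx + P E + (rho - rho0) P u = 0,   Dx = x(rho) - x0,  E = o(|Dx|).
   5. A general implicit-function estimate (implicit_derivative) turns this
      identity, together with continuity of x, into dx/drho (rho0) = - P u. *)

From Stdlib Require Import Reals Lra Lia FunctionalExtensionality List ClassicalEpsilon.
From mathcomp Require all_boot all_algebra Rstruct.
Open Scope R_scope.

Lemma fsum_ext n f g : (forall i, (i < n)%nat -> f i = g i) -> fsum n f = fsum n g.
Proof.
induction n as [|n IH]; intros H; simpl; [reflexivity|].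
rewrite IH by (intros; apply H; lia). rewrite H by lia. reflexivity.
Qed.

Lemma fsum_plus n f g : fsum n (fun i => f i + g i) = fsum n f + fsum n g.
Proof. induction n as [|n IH]; simpl; [lra|]. rewrite IH; lra. Qed.

Lemma fsum_minus n f g : fsum n (fun i => f i - g i) = fsum n f - fsum n g.
Proof. induction n as [|n IH]; simpl; [lra|]. rewrite IH; lra. Qed.

Lemma fsum_scal n c f : fsum n (fun i => c * f i) = c * fsum n f.
Proof. induction n as [|n IH]; simpl; [lra|]. rewrite IH; lra. Qed.

Lemma fsum_mul_r n f c : fsum n f * c = fsum n (fun i => f i * c).
Proof. induction n as [|n IH]; simpl; [lra|]. rewrite <- IH; ring. Qed.

Lemma fsum_zero n : fsum n (fun _ => 0) = 0.
Proof. induction n as [|n IH]; simpl; [lra|]. rewrite IH; lra. Qed.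

Lemma fsum_swap n m F :
  fsum n (fun i => fsum m (fun j => F i j)) = fsum m (fun j => fsum n (fun i => F i j)).
Proof.
induction n as [|n IH]; simpl.
- rewrite fsum_zero; reflexivity.
- rewrite IH, <- fsum_plus; reflexivity.
Qed.

Lemma fsum_le n f g : (forall i, (i < n)%nat -> f i <= g i) -> fsum n f <= fsum n g.
Proof.
induction n as [|n IH]; intros H; simpl; [lra|].
assert (fsum n f <= fsum n g) by (apply IH; intros; apply H; lia).
assert (f n <= g n) by (apply H; lia). lra.
Qed.

Lemma fsum_nonneg n f : (forall i, (i < n)%nat -> 0 <= f i) -> 0 <= fsum n f.
Proof. intros H. rewrite <- (fsum_zero n). apply fsum_le. exact H. Qed.

Lemma fsum_abs n f : Rabs (fsum n f) <= fsum n (fun i => Rabs (f i)).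
Proof.
induction n as [|n IH]; simpl.
- rewrite Rabs_R0; lra.
- eapply Rle_trans; [apply Rabs_triang|]. lra.
Qed.

Lemma fsum_term_le n f k :
  (forall i, (i < n)%nat -> 0 <= f i) -> (k < n)%nat -> f k <= fsum n f.
Proof.
induction n as [|n IH]; intros H Hk; [lia|]. simpl.
destruct (Nat.eq_dec k n) as [->|ne].
- assert (0 <= fsum n f) by (apply fsum_nonneg; intros; apply H; lia). lra.
- assert (f k <= fsum n f) by (apply IH; [intros; apply H; lia| lia]).
  assert (0 <= f n) by (apply H; lia). lra.
Qed.

Lemma fsum_const_le n f c : (forall i, (i < n)%nat -> f i <= c) -> fsum n f <= INR n * c.
Proof.
induction n as [|n IH]; intros H; [simpl; lra|].
rewrite S_INR. cbn [fsum].
assert (fsum n f <= INR n * c) by (apply IH; intros; apply H; lia).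
assert (f n <= c) by (apply H; lia). lra.
Qed.

Lemma dot_comm p a b : dot p a b = dot p b a.
Proof. apply fsum_ext; intros; ring. Qed.

Lemma dot_lin p a x t h : dot p a (vadd x (vscale t h)) = dot p a x + t * dot p a h.
Proof.
unfold dot, vadd, vscale. rewrite <- fsum_scal, <- fsum_plus.
apply fsum_ext; intros; ring.
Qed.

Lemma dot_scale p a t h : dot p a (vscale t h) = t * dot p a h.
Proof. unfold dot, vscale. rewrite <- fsum_scal. apply fsum_ext; intros; ring. Qed.

Lemma dot_sub p a x y : dot p a (vsub x y) = dot p a x - dot p a y.
Proof. unfold dot, vsub. rewrite <- fsum_minus. apply fsum_ext; intros; ring. Qed.

Lemma mvec_sub p A x y : mvec p A (vsub x y) = vsub (mvec p A x) (mvec p A y).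
Proof.
apply functional_extensionality; intros i. unfold mvec, vsub.
rewrite <- fsum_minus. apply fsum_ext; intros; ring.
Qed.

Lemma vnorm_nonneg p h : 0 <= vnorm p h.
Proof. apply sqrt_pos. Qed.

Lemma vnorm_scale p t h : vnorm p (vscale t h) = Rabs t * vnorm p h.
Proof.
unfold vnorm. replace (dot p (vscale t h) (vscale t h)) with (Rsqr t * dot p h h).
- rewrite sqrt_mult_alt by apply Rle_0_sqr. rewrite sqrt_Rsqr_abs. reflexivity.
- unfold dot, vscale, Rsqr. rewrite <- fsum_scal. apply fsum_ext; intros; ring.
Qed.

Lemma vnorm_le_l1 p y : vnorm p y <= fsum p (fun l => Rabs (y l)).
Proof.
unfold vnorm.
assert (Hs : 0 <= fsum p (fun l => Rabs (y l))) by (apply fsum_nonneg; intros; apply Rabs_pos).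
rewrite <- (sqrt_Rsqr (fsum p (fun l => Rabs (y l)))) by exact Hs.
apply sqrt_le_1_alt. unfold dot, Rsqr.
clear Hs. induction p as [|p IH]; simpl; [lra|].
assert (0 <= fsum p (fun l => Rabs (y l))) by (apply fsum_nonneg; intros; apply Rabs_pos).
assert (Rabs (y p) * Rabs (y p) = y p * y p) by (rewrite <- Rabs_mult; apply Rabs_pos_eq; nra).
assert (0 <= Rabs (y p)) by apply Rabs_pos.
nra.
Qed.

Lemma mvec_abs_le p A y j c :
  (forall l, (l < p)%nat -> Rabs (y l) <= c) ->
  Rabs (mvec p A y j) <= fsum p (fun l => Rabs (A j l)) * c.
Proof.
intros Hy. eapply Rle_trans; [apply fsum_abs|]. rewrite fsum_mul_r. apply fsum_le.
intros l Hl. rewrite Rabs_mult. apply Rmult_le_compat_l; [apply Rabs_pos| apply Hy; exact Hl].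
Qed.

Lemma uniform_delta {A : Type} (size : A -> R) n (P : nat -> A -> Prop) :
  (forall k, (k < n)%nat -> exists del, 0 < del /\ forall a, size a < del -> P k a) ->
  exists del, 0 < del /\ forall a, size a < del -> forall k, (k < n)%nat -> P k a.
Proof.
induction n as [|n IH]; intros H.
- exists 1; split; [lra| intros; lia].
- destruct IH as [d1 [Hd1 H1]]; [intros; apply H; lia|].
  destruct (H n) as [d2 [Hd2 H2]]; [lia|].
  exists (Rmin d1 d2); split; [apply Rmin_pos; lra|].
  intros a Ha k Hk.
  assert (size a < d1) by (eapply Rlt_le_trans; [exact Ha| apply Rmin_l]).
  assert (size a < d2) by (eapply Rlt_le_trans; [exact Ha| apply Rmin_r]).
  destruct (Nat.eq_dec k n) as [->|ne]; [apply H2; auto| apply H1; auto; lia].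
Qed.

(** Local first-order behaviour of the penalty terms. *)

(* Slope of [|g|] and of [max 0 g] at a point where the constraint value is [g]. *)
Definition sg (g : R) : R := if Rlt_dec g 0 then -1 else if Rlt_dec 0 g then 1 else 0.
Definition pos (g : R) : R := if Rlt_dec 0 g then 1 else 0.

Lemma sign_persists g a : g <> 0 -> exists del, 0 < del /\ forall t, Rabs t < del ->
  (g < 0 /\ g + t * a < 0) \/ (0 < g /\ 0 < g + t * a).
Proof.
intros Hg. assert (Hga : 0 < Rabs g) by (apply Rabs_pos_lt; exact Hg).
assert (Ha : 0 <= Rabs a) by apply Rabs_pos.
exists (Rabs g / (Rabs a + 1)); split; [apply Rdiv_lt_0_compat; lra|].
intros t Ht.
assert (Hta : Rabs (t * a) < Rabs g).
{ rewrite Rabs_mult. assert (0 <= Rabs t) by apply Rabs_pos.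
  apply (Rmult_lt_compat_r (Rabs a + 1)) in Ht; [|lra].
  unfold Rdiv in Ht. rewrite Rmult_assoc, Rinv_l in Ht by lra. nra. }
apply Rabs_def2 in Hta. destruct (Rlt_le_dec g 0) as [Hn|Hp].
- left. rewrite Rabs_left in Hta by lra. lra.
- right. rewrite Rabs_right in Hta by lra. lra.
Qed.

Lemma abs_affine_near g a : (g = 0 -> a = 0) -> exists del, 0 < del /\
  forall t, Rabs t < del -> Rabs (g + t * a) = Rabs g + t * (sg g * a).
Proof.
intros Hz. destruct (Req_dec g 0) as [Hg|Hg].
- rewrite (Hz Hg), Hg. exists 1; split; [lra|]. intros t _.
  replace (0 + t * 0) with 0 by ring. ring.
- destruct (sign_persists g a Hg) as [del [Hd Hs]]. exists del; split; [exact Hd|].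
  intros t Ht. unfold sg.
  destruct (Hs t Ht) as [[H1 H2]|[H1 H2]].
  + rewrite !Rabs_left by lra. destruct (Rlt_dec g 0); [ring| lra].
  + rewrite !Rabs_right by lra. destruct (Rlt_dec g 0); [lra|].
    destruct (Rlt_dec 0 g); [ring| lra].
Qed.

Lemma max_affine_near g a : (g = 0 -> a = 0) -> exists del, 0 < del /\
  forall t, Rabs t < del -> Rmax 0 (g + t * a) = Rmax 0 g + t * (pos g * a).
Proof.
intros Hz. destruct (Req_dec g 0) as [Hg|Hg].
- rewrite (Hz Hg), Hg. exists 1; split; [lra|]. intros t _.
  replace (0 + t * 0) with 0 by ring. ring.
- destruct (sign_persists g a Hg) as [del [Hd Hs]]. exists del; split; [exact Hd|].
  intros t Ht. unfold pos.
  destruct (Hs t Ht) as [[H1 H2]|[H1 H2]].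
  + rewrite !Rmax_left by lra. destruct (Rlt_dec 0 g); [lra| ring].
  + rewrite !Rmax_right by lra. destruct (Rlt_dec 0 g); [ring| lra].
Qed.

Lemma gfun_lin p v d i x t h :
  gfun p v d i (vadd x (vscale t h)) = gfun p v d i x + t * dot p (v i) h.
Proof. unfold gfun. rewrite dot_lin. ring. Qed.

(* [u_{bar Z}] collects the slopes of all penalty terms. *)
Lemma ubarZ_dot p r s v d w e x h :
  dot p (ubarZ p r s v d w e x) h =
  fsum r (fun i => sg (gfun p v d i x) * dot p (v i) h) +
  fsum s (fun j => pos (gfun p w e j x) * dot p (w j) h).
Proof.
unfold dot, ubarZ.
transitivity (fsum p (fun l => fsum r (fun i => sg (gfun p v d i x) * (v i l * h l)) +
                               fsum s (fun j => pos (gfun p w e j x) * (w j l * h l)))).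
- apply fsum_ext; intros l _. rewrite Rmult_plus_distr_r, !fsum_mul_r. f_equal.
  + apply fsum_ext; intros i _. unfold sg.
    destruct (Rlt_dec (gfun p v d i x) 0); [ring|].
    destruct (Rlt_dec 0 (gfun p v d i x)); ring.
  + apply fsum_ext; intros j _. unfold pos. destruct (Rlt_dec 0 (gfun p w e j x)); ring.
- rewrite fsum_plus, (fsum_swap p r), (fsum_swap p s).
  f_equal; apply fsum_ext; intros; rewrite fsum_scal; reflexivity.
Qed.

Lemma penalty_increment p r s f v d w e rho x h :
  (forall i, (i < r)%nat -> gfun p v d i x = 0 -> dot p (v i) h = 0) ->
  (forall j, (j < s)%nat -> gfun p w e j x = 0 -> dot p (w j) h = 0) ->
  exists del, 0 < del /\ forall t, Rabs t < del ->
    Epen p r s f v d w e rho (vadd x (vscale t h)) - Epen p r s f v d w e rho x =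
    f (vadd x (vscale t h)) - f x + t * (rho * dot p (ubarZ p r s v d w e x) h).
Proof.
intros Hv Hw.
destruct (uniform_delta Rabs r (fun i t => Rabs (gfun p v d i x + t * dot p (v i) h) =
    Rabs (gfun p v d i x) + t * (sg (gfun p v d i x) * dot p (v i) h))) as [d1 [Hd1 H1]].
{ intros i Hi. apply abs_affine_near. apply Hv; exact Hi. }
destruct (uniform_delta Rabs s (fun j t => Rmax 0 (gfun p w e j x + t * dot p (w j) h) =
    Rmax 0 (gfun p w e j x) + t * (pos (gfun p w e j x) * dot p (w j) h))) as [d2 [Hd2 H2]].
{ intros j Hj. apply max_affine_near. apply Hw; exact Hj. }
exists (Rmin d1 d2); split; [apply Rmin_pos; assumption|]. intros t Ht.
assert (Rabs t < d1) by (eapply Rlt_le_trans; [exact Ht| apply Rmin_l]).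
assert (Rabs t < d2) by (eapply Rlt_le_trans; [exact Ht| apply Rmin_r]).
unfold Epen. rewrite ubarZ_dot.
rewrite (fsum_ext r (fun i => Rabs (gfun p v d i (vadd x (vscale t h))))
   (fun i => Rabs (gfun p v d i x) + t * (sg (gfun p v d i x) * dot p (v i) h)))
  by (intros i Hi; rewrite gfun_lin; apply H1; assumption).
rewrite (fsum_ext s (fun j => Rmax 0 (gfun p w e j (vadd x (vscale t h))))
   (fun j => Rmax 0 (gfun p w e j x) + t * (pos (gfun p w e j x) * dot p (w j) h)))
  by (intros j Hj; rewrite gfun_lin; apply H2; assumption).
rewrite !fsum_plus, !fsum_scal. ring.
Qed.

Lemma zero_of_small c N : 0 <= N -> (forall eps, 0 < eps -> Rabs c <= eps * N) -> c = 0.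
Proof.
intros HN H. destruct (Req_dec c 0) as [|Hc]; [assumption|]. exfalso.
assert (Ha : 0 < Rabs c) by (apply Rabs_pos_lt; exact Hc).
assert (Hq : 0 < Rabs c / (2 * (N + 1))) by (apply Rdiv_lt_0_compat; lra).
specialize (H _ Hq).
assert (Rabs c / (2 * (N + 1)) * N < Rabs c); [|lra].
apply (Rmult_lt_reg_r (2 * (N + 1))); [lra|].
replace (Rabs c / (2 * (N + 1)) * N * (2 * (N + 1))) with (Rabs c * N) by (field; lra).
nra.
Qed.

Lemma small_step a b N : 0 < a -> 0 < b -> 0 <= N -> exists t, 0 < t /\ t < a /\ t * N < b.
Proof.
intros Ha Hb HN.
assert (Hq : 0 < b / (N + 1)) by (apply Rdiv_lt_0_compat; lra).
set (m := Rmin a (b / (N + 1))).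
assert (Hm : 0 < m) by (apply Rmin_pos; assumption).
assert (m <= a) by apply Rmin_l. assert (m <= b / (N + 1)) by apply Rmin_r.
exists (m / 2). repeat split; [lra| lra|].
assert (Hmb : m * (N + 1) <= b).
{ apply (Rmult_le_reg_r (/ (N + 1))); [apply Rinv_0_lt_compat; lra|].
  rewrite Rmult_assoc, Rinv_r, Rmult_1_r by lra. exact H0. }
nra.
Qed.

Lemma stationary_direction p F x g h c :
  frechet_at p F x g ->
  (exists del, 0 < del /\ forall t, Rabs t < del -> 0 <= F (vadd x (vscale t h)) - F x + t * c) ->
  dot p g h + c = 0.
Proof.
intros HF [del [Hdel Hmin]].
set (N := vnorm p h). assert (HN : 0 <= N) by apply vnorm_nonneg.
apply (zero_of_small _ N HN). intros eps Heps.
destruct (HF eps Heps) as [d3 [Hd3 H3]].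
destruct (small_step del d3 N Hdel Hd3 HN) as [t [Ht0 [Ht1 Ht2]]].
assert (key : forall tau, Rabs tau = t -> 0 <= tau * (dot p g h + c) + eps * (t * N)).
{ intros tau Htau.
  assert (Hm := Hmin tau ltac:(lra)).
  assert (Hn : vnorm p (vscale tau h) = t * N) by (rewrite vnorm_scale, Htau; reflexivity).
  assert (Hf := H3 (vscale tau h) ltac:(rewrite Hn; exact Ht2)).
  rewrite Hn, dot_scale in Hf.
  assert (Hz := Rle_abs (F (vadd x (vscale tau h)) - F x - tau * dot p g h)). lra. }
assert (k1 := key t (Rabs_right t ltac:(lra))).
assert (k2 := key (- t) ltac:(rewrite Rabs_Ropp; apply Rabs_right; lra)).
apply Rabs_le. split; apply (Rmult_le_reg_l t); lra.
Qed.

Lemma kkt_tangent p r s f v d w e g rho x h :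
  (forall y, Epen p r s f v d w e rho x <= Epen p r s f v d w e rho y) ->
  frechet_at p f x g ->
  (forall i, (i < r)%nat -> gfun p v d i x = 0 -> dot p (v i) h = 0) ->
  (forall j, (j < s)%nat -> gfun p w e j x = 0 -> dot p (w j) h = 0) ->
  dot p g h + rho * dot p (ubarZ p r s v d w e x) h = 0.
Proof.
intros Hmin Hf Hv Hw. apply (stationary_direction p f x); [exact Hf|].
destruct (penalty_increment p r s f v d w e rho x h Hv Hw) as [del [Hd HE]].
exists del; split; [exact Hd|]. intros t Ht.
specialize (HE t Ht). specialize (Hmin (vadd x (vscale t h))). lra.
Qed.

Lemma if_iff (A B : Prop) (T : Type) (a : {A} + {~ A}) (b : {B} + {~ B}) (X Y : T) :
  (A <-> B) -> (if a then X else Y) = (if b then X else Y).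
Proof. intros HAB. destruct a, b; tauto. Qed.

Lemma iff_under (A B C : Prop) : A -> (A /\ B <-> A /\ C) -> (B <-> C).
Proof. tauto. Qed.

Lemma active_v_transfer p r s v d w e x y i :
  same_index_sets p r s v d w e x y -> (i < r)%nat ->
  (gfun p v d i x = 0 <-> gfun p v d i y = 0).
Proof.
intros HS Hi. destruct (HS i i) as (_ & HZ & _). exact (iff_under _ _ _ Hi HZ).
Qed.

Lemma active_w_transfer p r s v d w e x y j :
  same_index_sets p r s v d w e x y -> (j < s)%nat ->
  (gfun p w e j x = 0 <-> gfun p w e j y = 0).
Proof.
intros HS Hj. destruct (HS j j) as (_ & _ & _ & _ & HZ & _). exact (iff_under _ _ _ Hj HZ).
Qed.

Lemma Zrows_invariant p r s v d w e x y :
  same_index_sets p r s v d w e x y -> Zrows p r s v d w e x = Zrows p r s v d w e y.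
Proof.
intros HS. unfold Zrows, is_zero.
f_equal; f_equal; apply filter_ext_in; intros a Ha; apply in_seq in Ha; apply if_iff.
- apply (active_v_transfer p r s v d w e x y a HS). lia.
- apply (active_w_transfer p r s v d w e x y a HS). lia.
Qed.

Lemma ubarZ_invariant p r s v d w e x y :
  same_index_sets p r s v d w e x y -> ubarZ p r s v d w e x = ubarZ p r s v d w e y.
Proof.
intros HS. apply functional_extensionality; intros l. unfold ubarZ.
f_equal; apply fsum_ext; intros a Ha;
  destruct (HS a a) as (HN & _ & HP & _ & _ & HQ).
- rewrite (if_iff _ _ _ (Rlt_dec (gfun p v d a x) 0) (Rlt_dec (gfun p v d a y) 0)) by exact (iff_under _ _ _ Ha HN).
  rewrite (if_iff _ _ _ (Rlt_dec 0 (gfun p v d a x)) (Rlt_dec 0 (gfun p v d a y))) by exact (iff_under _ _ _ Ha HP).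
  reflexivity.
- apply if_iff. exact (iff_under _ _ _ Ha HQ).
Qed.

Lemma Zrows_nth_active p r s v d w e x k :
  (k < length (Zrows p r s v d w e x))%nat ->
  (exists i, (i < r)%nat /\ gfun p v d i x = 0 /\ nth k (Zrows p r s v d w e x) zero_vec = v i) \/
  (exists j, (j < s)%nat /\ gfun p w e j x = 0 /\ nth k (Zrows p r s v d w e x) zero_vec = w j).
Proof.
intros Hk. assert (Hin := nth_In (Zrows p r s v d w e x) zero_vec Hk).
set (z := nth k (Zrows p r s v d w e x) zero_vec) in *. clearbody z.
unfold Zrows in Hin. apply in_app_or in Hin. destruct Hin as [Hin|Hin];
  apply in_map_iff in Hin; destruct Hin as [a [Ha Hin]]; apply filter_In in Hin;
  destruct Hin as [Hin Hz]; apply in_seq in Hin; unfold is_zero in Hz;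
  destruct (Req_EM_T _ 0) as [Hz0|]; try discriminate.
- left. exists a. repeat split; [lia| exact Hz0| symmetry; exact Ha].
- right. exists a. repeat split; [lia| exact Hz0| symmetry; exact Ha].
Qed.

Lemma is_zero_true a : a = 0 -> is_zero a = true.
Proof. intros ->. unfold is_zero. destruct (Req_EM_T 0 0); [reflexivity| congruence]. Qed.

Lemma active_v_in_Zrows p r s v d w e x i : (i < r)%nat -> gfun p v d i x = 0 ->
  exists k, (k < length (Zrows p r s v d w e x))%nat /\ nth k (Zrows p r s v d w e x) zero_vec = v i.
Proof.
intros Hi Hz. apply In_nth. unfold Zrows. apply in_or_app. left. apply in_map.
apply filter_In. split; [apply in_seq; lia| apply is_zero_true; exact Hz].
Qed.

Lemma active_w_in_Zrows p r s v d w e x j : (j < s)%nat -> gfun p w e j x = 0 ->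
  exists k, (k < length (Zrows p r s v d w e x))%nat /\ nth k (Zrows p r s v d w e x) zero_vec = w j.
Proof.
intros Hj Hz. apply In_nth. unfold Zrows. apply in_or_app. right. apply in_map.
apply filter_In. split; [apply in_seq; lia| apply is_zero_true; exact Hz].
Qed.

(** Linear algebra of the projector [P], carried out with MathComp matrices. *)

(* The matrix [P] of the statement for an arbitrary [m x p] matrix [U] and
   [p x p] matrix [H]; [Pmat] is by definition [proj_mat] applied to [U_Z] and
   [H(x)]. *)
Definition proj_mat (p m : nat) (U H : mat) : mat :=
  let Hi := minv p H in
  let HiUt := mmul p Hi (transp U) in
  let M := mmul p U HiUt in
  fun i j => Hi i j - mmul m (mmul m HiUt (minv m M)) (mmul p U Hi) i j.

Module ProjectorAlgebra.

Import all_boot all_algebra Rstruct GRing.Theory.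
Local Open Scope ring_scope.

Lemma fsum_big n (f : nat -> R) : fsum n f = \sum_(i < n) f i.
Proof.
elim: n => [|n IH] /=; first by rewrite big_ord0.
by rewrite big_ord_recr /= IH.
Qed.

Definition mxof n m (A : mat) : 'M[R]_(n, m) := \matrix_(i < n, j < m) A i j.

Definition matof {n m} (X : 'M[R]_(n, m)) : mat :=
  fun i j => match (insub i : option 'I_n), (insub j : option 'I_m) with
             | Some a, Some b => X a b | _, _ => 0 end.

Lemma matofE n m (X : 'M[R]_(n, m)) (i : 'I_n) (j : 'I_m) : matof X i j = X i j.
Proof. by rewrite /matof !valK. Qed.

Lemma mxofK n m (X : 'M[R]_(n, m)) : mxof n m (matof X) = X.
Proof. by apply/matrixP => i j; rewrite !mxE matofE. Qed.

Lemma mxofE n m A (i : 'I_n) (j : 'I_m) : mxof n m A i j = A i j.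
Proof. by rewrite mxE. Qed.

Lemma mxof_mul n m k A B : mxof n m (mmul k A B) = mxof n k A *m mxof k m B.
Proof.
apply/matrixP => i j; rewrite !mxE /mmul fsum_big.
by apply: eq_bigr => l _; rewrite !mxE.
Qed.

Lemma mxof_tr n m A : mxof n m (transp A) = (mxof m n A)^T.
Proof. by apply/matrixP => i j; rewrite !mxE. Qed.

Lemma idm_eq n (i j : 'I_n) : idm i j = (i == j)%:R.
Proof.
rewrite /idm; case: Nat.eq_dec => [e|ne] /=.
  by rewrite (_ : i = j) ?eqxx //; apply: val_inj.
by case: eqP => // ij; case: ne; rewrite ij.
Qed.

Lemma is_inverse_mxof n A B :
  is_inverse n A B <-> (mxof n n A *m mxof n n B = 1%:M /\ mxof n n B *m mxof n n A = 1%:M).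
Proof.
split.
  move=> h; split; apply/matrixP => i j; rewrite -mxof_mul !mxE -idm_eq;
    by have [||h1 h2] := h i j; try apply/ltP.
move=> [h1 h2] i j /ltP hi /ltP hj.
have := congr1 (fun X : 'M[R]_n => X (Ordinal hi) (Ordinal hj)) h1.
have := congr1 (fun X : 'M[R]_n => X (Ordinal hi) (Ordinal hj)) h2.
by rewrite -!mxof_mul !mxE -!(idm_eq n (Ordinal hi) (Ordinal hj)).
Qed.

Lemma minv_mxof n A : mxof n n A \in unitmx -> mxof n n (minv n A) = invmx (mxof n n A).
Proof.
move=> uA.
have ex : exists B, is_inverse n A B.
  exists (matof (invmx (mxof n n A))); apply/is_inverse_mxof.
  by rewrite mxofK mulmxV // mulVmx.
have := epsilon_spec (inhabits zero_mat) (fun B => is_inverse n A B) ex.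
rewrite -/(minv n A) => /is_inverse_mxof [h1 _].
by rewrite -[LHS]mul1mx -(mulVmx uA) -mulmxA h1 mulmx1.
Qed.

Lemma mxof_mvec n k A y :
  mxof n 1 (fun i _ => mvec k A y i) = mxof n k A *m mxof k 1 (fun i _ => y i).
Proof.
apply/matrixP => i j; rewrite !mxE /mvec fsum_big.
by apply: eq_bigr => l _; rewrite !mxE.
Qed.

Section Projector.

Variables (p m : nat) (U H : mat).
Hypothesis H_pd : forall y : vec, (exists i, (i < p)%coq_nat /\ y i <> R0) ->
  Rlt R0 (dot p y (mvec p H y)).
Hypothesis U_indep : forall c : nat -> R,
  (forall l, (l < p)%coq_nat -> fsum m (fun k => Rmult (c k) (U k l)) = R0) ->
  forall k, (k < m)%coq_nat -> c k = R0.

Let H' := mxof p p H.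
Let U' := mxof m p U.

Lemma H'_definite (y : 'cV[R]_p) : y^T *m H' *m y = 0 -> y = 0.
Proof.
move=> y0; apply/matrixP => a b; rewrite (ord1 b) mxE.
case: (Req_dec (y a 0) 0) => // ne; exfalso.
pose yv : vec := fun i => matof y i 0.
have yvE : forall c : 'I_p, yv c = y c 0 by move=> c; rewrite /yv (matofE _ _ y c 0).
have := H_pd yv.
have -> : dot p yv (mvec p H yv) = (y^T *m H' *m y) 0 0.
  rewrite -mulmxA /dot fsum_big !mxE; apply: eq_bigr => i _.
  rewrite !mxE /mvec fsum_big yvE; congr (_ * _).
  by apply: eq_bigr => l _; rewrite !mxE yvE.
rewrite y0 mxE => h.
have ha : (nat_of_ord a < p)%coq_nat by apply/ltP.
have hy : yv a <> 0 by rewrite yvE.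
exact: (Rlt_irrefl R0 (h (ex_intro _ (nat_of_ord a) (conj ha hy)))).
Qed.

Lemma U'_row_free (l : 'rV[R]_m) : l *m U' = 0 -> l = 0.
Proof.
move=> l0; apply/matrixP => a b; rewrite (ord1 a) mxE.
pose c : nat -> R := fun k => matof l 0 k.
have cE : forall k : 'I_m, c k = l 0 k by move=> k; rewrite /c (matofE _ _ l 0 k).
rewrite -cE; apply: U_indep; last by apply/ltP.
move=> j /ltP hj.
have := congr1 (fun X : 'M[R]_(1, p) => X 0 (Ordinal hj)) l0.
rewrite !mxE fsum_big => h; apply: (eq_trans _ h).
by apply: eq_bigr => k _; rewrite cE mxE.
Qed.

Lemma H'_unit : H' \in unitmx.
Proof.
rewrite -row_free_unit; apply: inj_row_free => y yH.
apply: trmx_inj; rewrite trmx0; apply: H'_definite.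
by rewrite trmxK yH mul0mx.
Qed.

Let Hi' := invmx H'.

Lemma Hi'_definite (z : 'cV[R]_p) : z^T *m Hi' *m z = 0 -> z = 0.
Proof.
move=> h.
have zE : z = H' *m (Hi' *m z) by rewrite mulmxA mulmxV ?mul1mx // H'_unit.
suff e : Hi' *m z = 0 by rewrite zE e mulmx0.
apply: H'_definite.
have t1 : forall A : 'M[R]_1, A^T = A.
  by move=> A; apply/matrixP => i j; rewrite (ord1 i) (ord1 j) mxE.
have e1 : forall (y : 'cV[R]_p) (A : 'M[R]_p), (y^T *m A *m y)^T = (A *m y)^T *m y.
  by move=> y A; rewrite !trmx_mul trmxK mulmxA.
by rewrite -[LHS]t1 e1 -zE mulmxA.
Qed.

Let M' := U' *m (Hi' *m U'^T).

Lemma M'_unit : M' \in unitmx.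
Proof.
rewrite -row_free_unit; apply: inj_row_free => l lM.
apply: U'_row_free; apply: trmx_inj; rewrite trmx0 trmx_mul.
apply: Hi'_definite.
rewrite trmx_mul !trmxK.
have -> : l *m U' *m Hi' *m (U'^T *m l^T) = l *m M' *m l^T by rewrite /M' !mulmxA.
by rewrite lM mul0mx.
Qed.

Lemma mxof_proj :
  mxof p p (proj_mat p m U H) = Hi' - (Hi' *m U'^T *m invmx M') *m (U' *m Hi').
Proof.
have eH : mxof p p (minv p H) = Hi' by rewrite minv_mxof // H'_unit.
have eM : mxof m m (mmul p U (mmul p (minv p H) (transp U))) = M'.
  by rewrite !mxof_mul mxof_tr eH.
have eMi : mxof m m (minv m (mmul p U (mmul p (minv p H) (transp U)))) = invmx M'.
  by rewrite minv_mxof eM // M'_unit.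
apply/matrixP => i j.
rewrite [LHS]mxE /proj_mat -(mxofE _ _ (minv p H) i j) eH.
rewrite -(mxofE _ _ (mmul m _ _) i j) !mxof_mul mxof_tr eH eMi.
by rewrite !mxE.
Qed.

Lemma proj_Ut : mxof p p (proj_mat p m U H) *m U'^T = 0.
Proof.
rewrite mxof_proj mulmxBl -!mulmxA [U' *m (Hi' *m _)]mulmxA.
have -> : U' *m Hi' *m U'^T = M' by rewrite /M' mulmxA.
by rewrite mulVmx ?M'_unit // mulmx1 subrr.
Qed.

Lemma proj_H (D : 'cV[R]_p) : U' *m D = 0 -> mxof p p (proj_mat p m U H) *m (H' *m D) = D.
Proof.
move=> UD; rewrite mxof_proj mulmxBl mulmxA mulVmx ?H'_unit // mul1mx.
by rewrite -!mulmxA [Hi' *m (H' *m D)]mulmxA mulVmx ?H'_unit // mul1mx UD !mulmx0 subr0.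
Qed.

Lemma proj_rows j k : (j < p)%coq_nat -> (k < m)%coq_nat ->
  fsum p (fun l => Rmult (proj_mat p m U H j l) (U k l)) = R0.
Proof.
move=> /ltP hj /ltP hk.
have := congr1 (fun X : 'M[R]_(p, m) => X (Ordinal hj) (Ordinal hk)) proj_Ut.
rewrite !mxE fsum_big => h; apply: (eq_trans _ h).
by apply: eq_bigr => l _; rewrite !mxE.
Qed.

Lemma proj_inverts (D : vec) :
  (forall k, (k < m)%coq_nat -> fsum p (fun l => Rmult (U k l) (D l)) = R0) ->
  forall j, (j < p)%coq_nat -> mvec p (proj_mat p m U H) (mvec p H D) j = D j.
Proof.
move=> hD j /ltP hj.
have UD : U' *m mxof p 1 (fun i _ => D i) = 0.
  apply/matrixP => k b; rewrite (ord1 b) !mxE.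
  have := hD k (elimT ltP (ltn_ord k)); rewrite fsum_big => h; apply: (eq_trans _ h).
  by apply: eq_bigr => l _; rewrite !mxE.
have := congr1 (fun X : 'cV[R]_p => X (Ordinal hj) 0) (proj_H _ UD).
rewrite -mxof_mvec -mxof_mvec !mxE => h; exact: h.
Qed.

End Projector.

End ProjectorAlgebra.

(** An implicit-function argument for the derivative of a trajectory. *)

Lemma continuity_pt_eps g a : continuity_pt g a ->
  forall eps, 0 < eps -> exists alp, 0 < alp /\ forall h, Rabs h < alp -> Rabs (g (a + h) - g a) < eps.
Proof.
intros Hc eps He. destruct (Hc eps He) as [alp [Ha H]]. exists alp; split; [exact Ha|].
intros h Hh. destruct (Req_dec h 0) as [->|ne].
- rewrite Rplus_0_r. unfold Rminus. rewrite Rplus_opp_r, Rabs_R0. exact He.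
- apply (H (a + h)). split; [split; [exact I| lra]|].
  simpl. unfold R_dist. replace (a + h - a) with h by ring. exact Hh.
Qed.

Lemma gain_choice C K eps : 0 <= C -> 0 <= K -> 0 < eps ->
  exists eps1, 0 < eps1 /\ C * eps1 <= 1 / 2 /\ 2 * C * K * eps1 < eps.
Proof.
intros HC HK Heps.
set (eps1 := Rmin (/ (2 * (C + 1))) (eps / (2 * C * K + 1))).
assert (He1a : 0 < / (2 * (C + 1))) by (apply Rinv_0_lt_compat; lra).
assert (He1b : 0 < eps / (2 * C * K + 1)) by (apply Rdiv_lt_0_compat; nra).
assert (Ha : eps1 <= / (2 * (C + 1))) by apply Rmin_l.
assert (Hb : eps1 <= eps / (2 * C * K + 1)) by apply Rmin_r.
exists eps1. repeat split.
- apply Rmin_pos; assumption.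
- assert (C * / (2 * (C + 1)) <= 1 / 2); [|nra].
  apply (Rmult_le_reg_r (2 * (C + 1))); [lra|]. rewrite Rmult_assoc, Rinv_l by lra. lra.
- assert (2 * C * K * (eps / (2 * C * K + 1)) < eps); [|assert (0 <= 2 * C * K) by nra; nra].
  apply (Rmult_lt_reg_r (2 * C * K + 1)); [nra|].
  replace (2 * C * K * (eps / (2 * C * K + 1)) * (2 * C * K + 1)) with (2 * C * K * eps)
    by (field; nra). nra.
Qed.

(* Suppose the increments [Dx h = x (rho0 + h) - x rho0] of a continuous curve
   satisfy [Dx h + P (E h) + h P u = 0], where [E h] is a remainder that is
   [o(|Dx h|)].  Then the curve is differentiable at [rho0] with derivative [- P u]:
   the identity first gives [|Dx h| = O(|h|)], hence [P (E h) = o(|h|)]. *)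
Section ImplicitDerivative.

Variables (p : nat) (P : mat) (u : vec) (x E : R -> vec) (rho0 : R).

Let incr (h : R) : vec := vsub (x (rho0 + h)) (x rho0).

Hypothesis increment_identity : exists del, 0 < del /\ forall h, Rabs h < del ->
  forall j, (j < p)%nat -> incr h j + mvec p P (E h) j + h * mvec p P u j = 0.
Hypothesis remainder_small : forall eps, 0 < eps -> exists del, 0 < del /\
  forall h, vnorm p (incr h) < del ->
  forall l, (l < p)%nat -> Rabs (E h l) <= eps * vnorm p (incr h).
Hypothesis x_continuous : forall j, (j < p)%nat -> continuity_pt (fun t => x t j) rho0.

Let row_norm (j : nat) : R := fsum p (fun l => Rabs (P j l)).
Let C : R := fsum p row_norm.
Let K : R := fsum p (fun j => Rabs (mvec p P u j)).

Lemma row_norm_nonneg j : 0 <= row_norm j.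
Proof. apply fsum_nonneg; intros; apply Rabs_pos. Qed.

Lemma increment_small del : 0 < del ->
  exists alp, 0 < alp /\ forall h, Rabs h < alp -> vnorm p (incr h) < del.
Proof.
intros Hdel.
assert (Hp : 0 < INR p + 1) by (assert (0 <= INR p) by apply pos_INR; lra).
assert (Hq : 0 < del / (INR p + 1)) by (apply Rdiv_lt_0_compat; lra).
destruct (uniform_delta Rabs p (fun j h => Rabs (incr h j) < del / (INR p + 1))) as [alp [Ha H]].
{ intros j Hj. exact (continuity_pt_eps _ _ (x_continuous j Hj) _ Hq). }
exists alp; split; [exact Ha|]. intros h Hh.
apply (Rle_lt_trans _ (fsum p (fun l => Rabs (incr h l)))); [apply vnorm_le_l1|].
apply (Rle_lt_trans _ (INR p * (del / (INR p + 1)))).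
- apply fsum_const_le. intros j Hj. left. exact (H h Hh j Hj).
- apply (Rmult_lt_reg_r (INR p + 1)); [lra|].
  replace (INR p * (del / (INR p + 1)) * (INR p + 1)) with (INR p * del) by (field; lra). nra.
Qed.

(* Absorbing the remainder: the increments are Lipschitz in [h]. *)
Lemma increment_lipschitz h eps1 :
  C * eps1 <= 1 / 2 ->
  (forall j, (j < p)%nat -> incr h j + mvec p P (E h) j + h * mvec p P u j = 0) ->
  (forall l, (l < p)%nat -> Rabs (E h l) <= eps1 * vnorm p (incr h)) ->
  vnorm p (incr h) <= 2 * Rabs h * K.
Proof.
intros HCe Hid HE. set (N := vnorm p (incr h)) in *.
assert (HN : 0 <= N) by apply vnorm_nonneg.
assert (HNb : N <= C * (eps1 * N) + Rabs h * K).
{ apply (Rle_trans _ (fsum p (fun l => Rabs (incr h l)))); [apply vnorm_le_l1|].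
  unfold C, K. rewrite fsum_mul_r, <- fsum_scal, <- fsum_plus. apply fsum_le.
  intros j Hj.
  replace (incr h j) with (- mvec p P (E h) j + - (h * mvec p P u j)) by (specialize (Hid j Hj); lra).
  eapply Rle_trans; [apply Rabs_triang|]. rewrite !Rabs_Ropp, Rabs_mult.
  assert (Hq := mvec_abs_le p P (E h) j _ HE). unfold row_norm. lra. }
assert (C * (eps1 * N) <= 1 / 2 * N) by nra. lra.
Qed.

Lemma implicit_derivative i : (i < p)%nat ->
  derivable_pt_lim (fun t => x t i) rho0 (- mvec p P u i).
Proof.
intros Hi eps Heps.
assert (HC : 0 <= C) by (apply fsum_nonneg; intros; apply row_norm_nonneg).
assert (HK : 0 <= K) by (apply fsum_nonneg; intros; apply Rabs_pos).
destruct (gain_choice C K eps HC HK Heps) as [eps1 [He1 [HCe HKe]]].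
destruct (remainder_small eps1 He1) as [dR [HdR HR]].
destruct (increment_small dR HdR) as [dc [Hdc Hc]].
destruct increment_identity as [dI [HdI HI]].
assert (Hpos : 0 < Rmin dc dI) by (apply Rmin_pos; assumption).
exists (mkposreal _ Hpos). intros h Hh0 Hh. simpl in Hh.
assert (Hhc : Rabs h < dc) by (eapply Rlt_le_trans; [exact Hh| apply Rmin_l]).
assert (Hhi : Rabs h < dI) by (eapply Rlt_le_trans; [exact Hh| apply Rmin_r]).
assert (Hhp : 0 < Rabs h) by (apply Rabs_pos_lt; exact Hh0).
set (N := vnorm p (incr h)). assert (HN0 : 0 <= N) by apply vnorm_nonneg.
assert (HE := HR h (Hc h Hhc)).
assert (HN : N <= 2 * Rabs h * K) by exact (increment_lipschitz h eps1 HCe (HI h Hhi) HE).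
assert (HPE : Rabs (mvec p P (E h) i) <= C * (eps1 * N)).
{ eapply Rle_trans; [exact (mvec_abs_le p P (E h) i _ HE)|].
  apply Rmult_le_compat_r; [nra|].
  apply (fsum_term_le p row_norm); [intros; apply row_norm_nonneg| exact Hi]. }
assert (Hid := HI h Hhi i Hi). unfold incr, vsub in Hid.
replace (x (rho0 + h) i - x rho0 i) with (- mvec p P (E h) i - h * mvec p P u i) by lra.
replace ((- mvec p P (E h) i - h * mvec p P u i) / h - - mvec p P u i)
  with (- mvec p P (E h) i / h) by (field; exact Hh0).
unfold Rdiv. rewrite Rabs_mult, Rabs_Ropp, Rabs_inv.
apply (Rmult_lt_reg_r (Rabs h)); [exact Hhp|].
rewrite Rmult_assoc, Rinv_l by lra.
assert (C * eps1 * N <= C * eps1 * (2 * Rabs h * K))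
  by (apply Rmult_le_compat_l; [apply Rmult_le_pos; lra| exact HN]).
assert ((2 * C * K * eps1) * Rabs h < eps * Rabs h) by (apply Rmult_lt_compat_r; lra).
lra.
Qed.

End ImplicitDerivative.

Definition taylor_remainder (p : nat) (G : vec -> vec) (H : mat) (x0 x : vec) : vec :=
  vsub (vsub (G x) (G x0)) (mvec p H (vsub x x0)).

Lemma vadd_vsub x y : vadd y (vsub x y) = x.
Proof. apply functional_extensionality; intros q. unfold vadd, vsub. ring. Qed.

Lemma taylor_remainder_small p G Hs x0 :
  (forall l, (l < p)%nat -> frechet_at p (fun y => G y l) x0 (Hs x0 l)) ->
  forall eps, 0 < eps -> exists del, 0 < del /\ forall x, vnorm p (vsub x x0) < del ->
    forall l, (l < p)%nat -> Rabs (taylor_remainder p G (Hs x0) x0 x l) <= eps * vnorm p (vsub x x0).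
Proof.
intros HG eps Heps.
apply (uniform_delta (fun x => vnorm p (vsub x x0)) p
  (fun l x => Rabs (taylor_remainder p G (Hs x0) x0 x l) <= eps * vnorm p (vsub x x0))).
intros l Hl. destruct (HG l Hl eps Heps) as [del [Hdel H]].
exists del; split; [exact Hdel|]. intros x Hx.
specialize (H (vsub x x0) Hx). rewrite vadd_vsub in H. exact H.
Qed.

Section Trajectory.

Variables (p r s : nat) (f : vec -> R) (v : nat -> vec) (d : nat -> R)
  (w : nat -> vec) (e : nat -> R) (G : vec -> vec) (Hs : vec -> mat)
  (I : R -> Prop) (xr : R -> vec) (rho0 : R).

Hypothesis f_grad : forall x, frechet_at p f x (G x).
Hypothesis x_min : forall rho, I rho -> forall y : vec,
  Epen p r s f v d w e rho (xr rho) <= Epen p r s f v d w e rho y.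
Hypothesis x_sets : forall rho1 rho2, I rho1 -> I rho2 ->
  same_index_sets p r s v d w e (xr rho1) (xr rho2).
Hypothesis I_rho0 : I rho0.

Let x0 := xr rho0.
Let Z := Zrows p r s v d w e x0.
Let P := Pmat p r s v d w e Hs x0.
Let u := ubarZ p r s v d w e x0.

Hypothesis P_rows : forall j k, (j < p)%nat -> (k < length Z)%nat ->
  dot p (P j) (nth k Z zero_vec) = 0.
Hypothesis P_inverts : forall D : vec,
  (forall k, (k < length Z)%nat -> dot p (nth k Z zero_vec) D = 0) ->
  forall j, (j < p)%nat -> mvec p P (mvec p (Hs x0) D) j = D j.

(* The KKT condition at [x(rho)], tested against the rows of [P]. *)
Lemma projected_stationarity rho : I rho -> forall j, (j < p)%nat ->
  mvec p P (G (xr rho)) j + rho * mvec p P u j = 0.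
Proof.
intros Hr j Hj. assert (HS := x_sets rho rho0 Hr I_rho0).
change (dot p (P j) (G (xr rho)) + rho * dot p (P j) u = 0).
rewrite (dot_comm p (P j)), (dot_comm p (P j)).
unfold u, x0. rewrite <- (ubarZ_invariant _ _ _ _ _ _ _ _ _ HS).
apply (kkt_tangent p r s f); [exact (x_min rho Hr)| apply f_grad| |].
- intros a Ha Hz.
  apply (active_v_transfer p r s v d w e _ x0 a HS Ha) in Hz.
  destruct (active_v_in_Zrows p r s v d w e x0 a Ha Hz) as [k [Hk Hn]].
  rewrite <- Hn, dot_comm. exact (P_rows j k Hj Hk).
- intros a Ha Hz.
  apply (active_w_transfer p r s v d w e _ x0 a HS Ha) in Hz.
  destruct (active_w_in_Zrows p r s v d w e x0 a Ha Hz) as [k [Hk Hn]].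
  rewrite <- Hn, dot_comm. exact (P_rows j k Hj Hk).
Qed.

(* Active constraints stay active, so [x(rho) - x(rho0)] lies in the kernel of [U_Z]. *)
Lemma increment_tangent rho : I rho -> forall k, (k < length Z)%nat ->
  dot p (nth k Z zero_vec) (vsub (xr rho) x0) = 0.
Proof.
intros Hr k Hk. assert (HS := x_sets rho rho0 Hr I_rho0).
destruct (Zrows_nth_active p r s v d w e x0 k Hk) as [[a [Ha [Hz Hn]]]|[a [Ha [Hz Hn]]]];
  fold Z in Hn; rewrite Hn, dot_sub.
- apply (active_v_transfer p r s v d w e _ x0 a HS Ha) in Hz as Hz1.
  unfold gfun in Hz, Hz1. lra.
- apply (active_w_transfer p r s v d w e _ x0 a HS Ha) in Hz as Hz1.
  unfold gfun in Hz, Hz1. lra.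
Qed.

(* Subtracting the projected KKT conditions at [rho] and [rho0] and expanding the
   gradient to first order around [x0] yields the implicit equation for the increment. *)
Lemma trajectory_identity rho : I rho -> forall j, (j < p)%nat ->
  vsub (xr rho) x0 j + mvec p P (taylor_remainder p G (Hs x0) x0 (xr rho)) j
  + (rho - rho0) * mvec p P u j = 0.
Proof.
intros Hr j Hj. set (D := vsub (xr rho) x0).
rewrite <- (P_inverts D (increment_tangent rho Hr) j Hj).
unfold taylor_remainder. fold D. rewrite !mvec_sub. unfold vsub.
assert (A := projected_stationarity rho Hr j Hj).
assert (B := projected_stationarity rho0 I_rho0 j Hj). fold x0 in B.
lra.
Qed.

Lemma trajectory_identity_near :
  (exists delta, 0 < delta /\ forall t, Rabs (t - rho0) < delta -> I t) ->
  exists del, 0 < del /\ forall h, Rabs h < del -> forall j, (j < p)%nat ->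
    vsub (xr (rho0 + h)) x0 j + mvec p P (taylor_remainder p G (Hs x0) x0 (xr (rho0 + h))) j
    + h * mvec p P u j = 0.
Proof.
intros [del [Hdel HI]]. exists del; split; [exact Hdel|]. intros h Hh j Hj.
assert (Ih : I (rho0 + h)) by (apply HI; replace (rho0 + h - rho0) with h by ring; exact Hh).
assert (Hid := trajectory_identity _ Ih j Hj).
replace (rho0 + h - rho0) with h in Hid by ring. exact Hid.
Qed.

End Trajectory.

Theorem proposition1
  (p r s : nat) (f : vec -> R)
  (v : nat -> vec) (d : nat -> R) (w : nat -> vec) (e : nat -> R)
  (G : vec -> vec) (Hs : vec -> mat)
  (* f is a function on R^p: it only depends on the first p coordinates *)
  (f_Rp : forall x y : vec, (forall i, (i < p)%nat -> x i = y i) -> f x = f y)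
  (* f convex *)
  (f_convex : forall (x y : vec) (t : R), 0 <= t <= 1 ->
      f (vadd (vscale t x) (vscale (1 - t) y)) <= t * f x + (1 - t) * f y)
  (* f twice continuously differentiable: gradient G, Hessian Hs continuous *)
  (f_grad : forall x, frechet_at p f x (G x))
  (f_hess : forall x i, (i < p)%nat -> frechet_at p (fun y => G y i) x (Hs x i))
  (hess_cont : forall x, cont_mat_at p Hs x)
  (* Hessian positive definite everywhere *)
  (hess_pd : forall x y : vec, (exists i, (i < p)%nat /\ y i <> 0) ->
      0 < dot p y (mvec p (Hs x) y))
  (* I is an open interval contained in (0, +oo) *)
  (I : R -> Prop)
  (I_pos : forall rho, I rho -> 0 < rho)
  (I_interval : forall a b c, I a -> I c -> a <= b <= c -> I b)
  (I_open : forall rho, I rho -> exists delta, 0 < delta /\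
      forall t, Rabs (t - rho) < delta -> I t)
  (xr : R -> vec)
  (x_min : forall rho, I rho -> forall y : vec,
      Epen p r s f v d w e rho (xr rho) <= Epen p r s f v d w e rho y)
  (x_cont : forall rho, I rho -> forall i, (i < p)%nat ->
      continuity_pt (fun t => xr t i) rho)
  (x_sets : forall rho1 rho2, I rho1 -> I rho2 ->
      same_index_sets p r s v d w e (xr rho1) (xr rho2))
  (U_indep : forall rho, I rho ->
      rows_lin_indep p (Zrows p r s v d w e (xr rho))) :
  forall rho, I rho -> forall i, (i < p)%nat ->
    derivable_pt_lim (fun t => xr t i) rho
      (- mvec p (Pmat p r s v d w e Hs (xr rho)) (ubarZ p r s v d w e (xr rho)) i).
Proof.
intros rho0 Hr0 i Hi.
set (x0 := xr rho0). set (Z := Zrows p r s v d w e x0).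
assert (P_rows := ProjectorAlgebra.proj_rows p (length Z) (rows_mat Z) (Hs x0)
                    (hess_pd x0) (U_indep rho0 Hr0)).
assert (P_inverts := ProjectorAlgebra.proj_inverts p (length Z) (rows_mat Z) (Hs x0)
                       (hess_pd x0) (U_indep rho0 Hr0)).
apply (implicit_derivative p _ _ xr
         (fun h => taylor_remainder p G (Hs x0) x0 (xr (rho0 + h))) rho0);
  [| | exact (x_cont rho0 Hr0) | exact Hi].
- exact (trajectory_identity_near p r s f v d w e G Hs I xr rho0
           f_grad x_min x_sets Hr0 P_rows P_inverts (I_open rho0 Hr0)).
- intros eps Heps.
  destruct (taylor_remainder_small p G Hs x0 (f_hess x0) eps Heps) as [del [Hdel H]].
  exists del; split; [exact Hdel|]. intros h Hh. exact (H _ Hh).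
Qed.
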